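(* Let $d\ge2$, $i\in\{1,\dots,d\}$, $\widetilde x\in\mathbb{R}^{d-1}$, $y\in\mathbb{R}$ and $x = (\widetilde{x}_1,\dots,\widetilde{x}_{i-1},y,\widetilde{x}_i,\dots,\widetilde{x}_{d-1})^\top\in\mathbb{R}^d$. For $\theta\in\{\pm1\}^d$ write $\theta_{-i} := (\theta_1,\dots,\theta_{i-1},\theta_{i+1},\dots,\theta_d)^\top$. Then: 1. If $(\theta,p)=\mathrm{csa}_{\text{even}}(x)$ and $\theta_i = 1$, then $\mathrm{csa}_{\text{odd}}(\widetilde x) = (\theta_{-i}, p-1)$. 2. If $(\theta,p)=\mathrm{csa}_{\text{odd}}(x)$ and $\theta_i = 1$, then $\mathrm{csa}_{\text{even}}(\widetilde x) = (\theta_{-i}, p-1)$. 3. If $(\theta,p)=\mathrm{csa}_{\text{even}}(x)$ and $\theta_i = -1$, then $\mathrm{csa}_{\text{even}}(\widetilde x) = (\theta_{-i}, p)$. 4. If $(\theta,p)=\mathrm{csa}_{\text{odd}}(x)$ and $\theta_i = -1$, then $\mathrm{csa}_{\text{odd}}(\widetilde x) = (\theta_{-i}, p)$.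
   Context: Cut-search procedures: for $u\in\mathbb{R}^k$, $\mathrm{csa}_{\text{even}}(u)$ is computed as follows: set $\theta_j = 1$ if $u_j>1/2$ and $\theta_j=-1$ otherwise ($j=1,\dots,k$); if $|\{j:\theta_j=1\}|$ is even, let $j^*$ be the smallest index in $\arg\min_j |u_j - 1/2|$ and replace $\theta_{j^*}$ by $-\theta_{j^*}$; finally set $p = |\{j:\theta_j = 1\}| - 1$ and output $(\theta,p)$. $\mathrm{csa}_{\text{odd}}(u)$ is identical except that the flip is performed when $|\{j:\theta_j=1\}|$ is odd. (These output the only potentially violated forbidden-set inequality $\theta^\top w\le p$ of $\operatorname{conv}\{w\in\{0,1\}^k:\sum w_j \text{ even}\}$, respectively of its odd counterpart, at $\Pi_{[0,1]^k}(u)$.) *)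

From HB Require Import structures.
From mathcomp Require Import all_boot all_order all_algebra.
Set Implicit Arguments. Unset Strict Implicit. Unset Printing Implicit Defensive.
Import Order.TTheory GRing.Theory Num.Theory.
Local Open Scope ring_scope.

Section CSA.
Variable R : realFieldType.

Definition is_argmin (k : nat) (u : 'I_k -> R) (j : 'I_k) : bool :=
  [forall l, `|u j - 2^-1| <= `|u l - 2^-1|].

Definition jstar (k : nat) (u : 'I_k.+1 -> R) : 'I_k.+1 :=
  odflt ord0 [pick j | is_argmin u j &&
                       [forall l : 'I_k.+1, (l < j)%N ==> ~~ is_argmin u l]].

Definition theta0 (k : nat) (u : 'I_k -> R) (j : 'I_k) : int :=
  if 2^-1 < u j then 1 else -1.

Definition csa (b : bool) (k : nat) (u : 'I_k.+1 -> R) : {ffun 'I_k.+1 -> int} * int :=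
  let cnt := #|[pred j | theta0 u j == 1]| in
  let flip := odd cnt == b in
  let th := [ffun j => if flip && (j == jstar u) then - theta0 u j else theta0 u j] in
  (th, (#|[pred j | th j == 1]|)%:Z - 1).

Definition csa_even (k : nat) (u : 'I_k.+1 -> R) := csa false u.
Definition csa_odd (k : nat) (u : 'I_k.+1 -> R) := csa true u.

End CSA.

(* x = (xt_1,..,xt_{i-1}, y, xt_i, .., xt_{d-1}) *)
Definition insert_at {T : Type} (n : nat) (i : 'I_n.+1) (xt : 'I_n -> T) (y : T)
  : 'I_n.+1 -> T :=
  fun j => match unlift i j with Some j' => xt j' | None => y end.

Definition drop_coord {T : Type} (n : nat) (i : 'I_n.+1) (th : {ffun 'I_n.+1 -> T})
  : {ffun 'I_n -> T} := [ffun j => th (lift i j)].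

(** Deleting coordinate [i] keeps the initial signs of the other coordinates
    and keeps the flipped index [jstar] unless [jstar = i]. It lowers the number
    of initial ones by [[theta0 i == 1]], so the parity test of the reduced
    vector, run with the parity flag toggled iff [theta_i = 1], agrees with the
    original test when the flip (if any) is not at [i], and fails when it is.
    Either way the reduced output is the original one with coordinate [i]
    deleted and [p] lowered by [[theta_i == 1]]. *)
From HB Require Import structures.
From mathcomp Require Import all_boot all_order all_algebra.
From mathcomp Require Import zify.
Set Implicit Arguments. Unset Strict Implicit.
Import Order.TTheory GRing.Theory Num.Theory.
Local Open Scope ring_scope.

Lemma ltn_lift n (i : 'I_n.+1) (a b : 'I_n) : (lift i a < lift i b)%N = (a < b)%N.
Proof. by rewrite /= /bump; case: (leqP i a); case: (leqP i b) => /=; lia. Qed.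

Lemma card_lift n (i : 'I_n.+1) (P : pred 'I_n.+1) :
  #|P| = (P i + #|[pred j | P (lift i j)]|)%N.
Proof.
rewrite -!sum1_card big_mkcond /= (bigD1_ord i) //= big_mkcond /=.
by rewrite [in RHS]big_mkcond -topredE /=; case: (P i).
Qed.

Section FirstArgmin.
Variables (R : realFieldType) (k : nat).
Implicit Types (u : 'I_k.+1 -> R) (j : 'I_k.+1).

Definition first_argmin u j :=
  is_argmin u j && [forall l : 'I_k.+1, (l < j)%N ==> ~~ is_argmin u l].

Lemma jstarP u : first_argmin u (jstar u).
Proof.
rewrite /jstar; case: pickP => [j //|no_first]; exfalso.
have [j0 _ j0_min] := @arg_minP _ R _ ord0 xpredT (fun j => `|u j - 2^-1|) isT.
have argmin_j0 : is_argmin u j0 by apply/forallP => l; apply: j0_min.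
have [j1 argmin_j1 j1_min] := arg_minnP (fun j : 'I_k.+1 => nat_of_ord j) argmin_j0.
move/negP: (no_first j1); apply; rewrite /first_argmin argmin_j1 /=.
apply/forallP => l; apply/implyP => lt_l_j1; apply/negP => /j1_min.
by rewrite leqNgt lt_l_j1.
Qed.

Lemma first_argmin_uniq u j j' : first_argmin u j -> first_argmin u j' -> j = j'.
Proof.
move=> /andP[argmin_j /forallP first_j] /andP[argmin_j' /forallP first_j'].
apply: val_inj => /=; case: (ltngtP j j') => // lt.
  by move: (first_j' j); rewrite lt argmin_j.
by move: (first_j j'); rewrite lt argmin_j'.
Qed.

End FirstArgmin.

Lemma csa_count (R : realFieldType) b k (u : 'I_k.+1 -> R) :
  (csa b u).2 = #|[pred j | (csa b u).1 j == 1]|%:Z - 1.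
Proof. by []. Qed.

Section DropCoordinate.
Variables (R : realFieldType) (n : nat) (i : 'I_n.+2).
Variables (u : 'I_n.+2 -> R) (v : 'I_n.+1 -> R).
Hypothesis u_lift : forall j, u (lift i j) = v j.

Lemma is_argmin_lift j : is_argmin u (lift i j) -> is_argmin v j.
Proof. by move=> /forallP min_j; apply/forallP => l; rewrite -!u_lift. Qed.

Lemma is_argmin_lift_transfer j l :
  is_argmin u (lift i j) -> is_argmin v l -> is_argmin u (lift i l).
Proof.
move=> /forallP min_j /forallP min_l; apply/forallP => m.
rewrite u_lift; apply: le_trans (min_l j) _; rewrite -u_lift; exact: min_j.
Qed.

Lemma jstar_lift : jstar u != i -> jstar u = lift i (jstar v).
Proof.
move=> jstar_neq_i; case: (unliftP i (jstar u)) => [j|] jstar_eq; last first.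
  by rewrite jstar_eq eqxx in jstar_neq_i.
move: (jstarP u); rewrite jstar_eq => /andP[argmin_j /forallP first_j].
congr lift; apply: first_argmin_uniq (jstarP v); apply/andP; split.
  exact: is_argmin_lift.
apply/forallP => l; apply/implyP => lt_l_j; apply/negP.
move=> /(is_argmin_lift_transfer argmin_j) argmin_l.
by move: (first_j (lift i l)); rewrite ltn_lift lt_l_j argmin_l.
Qed.

Lemma theta0_lift j : theta0 u (lift i j) = theta0 v j.
Proof. by rewrite /theta0 u_lift. Qed.

Lemma card_theta0_lift :
  #|[pred j | theta0 u j == 1]| =
  ((theta0 u i == 1) + #|[pred j | theta0 v j == 1]|)%N.
Proof.
rewrite (card_lift i); congr (_ + _)%N.
by apply: eq_card => j; rewrite !inE /= theta0_lift.
Qed.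

Lemma csa_lift_theta b :
  let th := (csa b u).1 in (csa (b (+) (th i == 1)) v).1 = drop_coord i th.
Proof.
rewrite /= /csa /= card_theta0_lift oddD ffunE; apply/ffunP => j.
rewrite !ffunE theta0_lift.
have opp_theta0_eq1 : (- theta0 u i == 1) = ~~ (theta0 u i == 1).
  by rewrite /theta0; case: ifP.
case: (eqVneq i (jstar u)) => [jstar_eq_i|jstar_neq_i].
  (* whether or not [u] flipped at [i], the toggled test for [v] fails *)
  rewrite -jstar_eq_i lift_eqF !andbF andbT oddb (fun_if (eq_op^~ 1)) opp_theta0_eq1.
  by case: (theta0 u i == 1); case: b; case: (odd _).
rewrite andbF oddb jstar_lift 1?eq_sym // (inj_eq lift_inj).
by case: (theta0 u i == 1); case: b; case: (odd _).
Qed.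

Lemma csa_lift b th p :
  csa b u = (th, p) ->
  csa (b (+) (th i == 1)) v = (drop_coord i th, p - (th i == 1)%:R).
Proof.
move=> csa_u.
have theta_v : (csa (b (+) (th i == 1)) v).1 = drop_coord i th.
  by move: (csa_lift_theta b); rewrite csa_u.
have -> : p = #|[pred j | th j == 1]|%:Z - 1.
  by rewrite -[p]/((th, p).2) -csa_u csa_count csa_u.
rewrite [csa _ v]surjective_pairing csa_count theta_v; congr pair.
rewrite (card_lift i [pred j | th j == 1]) /=.
have -> : #|[pred j | drop_coord i th j == 1]| = #|[pred j | th (lift i j) == 1]|.
  by apply: eq_card => j; rewrite !inE /= ffunE.
by rewrite PoszD natz addrAC; congr (_ - 1); rewrite addrC addKr.
Qed.

End DropCoordinate.

Lemma insert_at_lift (T : Type) n (i : 'I_n.+1) (xt : 'I_n -> T) y j :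
  insert_at i xt y (lift i j) = xt j.
Proof. by rewrite /insert_at liftK. Qed.

Theorem theorem6 (R : realFieldType) (n : nat) (i : 'I_n.+2)
    (xt : 'I_n.+1 -> R) (y : R) :
  let x := insert_at i xt y in
  (forall (th : {ffun 'I_n.+2 -> int}) (p : int),
      csa_even x = (th, p) -> th i = 1 -> csa_odd xt = (drop_coord i th, p - 1)) /\
  (forall (th : {ffun 'I_n.+2 -> int}) (p : int),
      csa_odd x = (th, p) -> th i = 1 -> csa_even xt = (drop_coord i th, p - 1)) /\
  (forall (th : {ffun 'I_n.+2 -> int}) (p : int),
      csa_even x = (th, p) -> th i = -1 -> csa_even xt = (drop_coord i th, p)) /\
  (forall (th : {ffun 'I_n.+2 -> int}) (p : int),
      csa_odd x = (th, p) -> th i = -1 -> csa_odd xt = (drop_coord i th, p)).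
Proof.
move=> x; have csa_x := csa_lift (insert_at_lift i xt y).
by split; [|split; [|split]] => th p /csa_x + th_i; rewrite th_i /= ?subr0.
Qed.
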